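(* Let $X$ be an infinite discrete space and $G$ a subgroup of $\mathrm S(X)$ with the permutation topology $\tau_\partial$, and suppose the action of $G$ on $X$ is ultratransitive. Then: (1) the maximal equiuniformity $\mathcal U_X$ is totally bounded; (2) the completion of $X$ with respect to $\mathcal U_X$ is the one-point Alexandroff compactification $\alpha X$; (3) $L\wedge R=\mathcal U$; (4) $G$ is Roelcke precompact; (5) the Roelcke compactification of $G$ is the enveloping Ellis semigroup, i.e. the closure of $\jmath(G)$ in $(\alpha X)^{\alpha X}$, and coincides with the Roelcke compactification of $(\mathrm S(X),\tau_\partial)$.
   Context: The action is ultratransitive if for every $n$ and any two $n$-tuples of distinct points $x_1,\dots,x_n$ and $y_1,\dots,y_n$ there is $g\in G$ with $g(x_k)=y_k$. $\tau_\partial$: identity neighbourhood base the pointwise stabilizers $\mathrm{St}_{x_1,\dots,x_n}$. $\mathcal U_X$: uniformity on $X$ with base the partitions $\{\mathrm{St}_{x_1,\dots,x_n}x\mid x\in X\}$. $\mathcal U$: the uniformity on $G$ with base the coverings $\{\{h\in G\mid (g(x_k),h(x_k))\in\mathrm U,\ k=1,\dots,n\}\mid g\in G\}$, $x_1,\dots,x_n\in X$, $\mathrm U$ an entourage of $\mathcal U_X$. $L\wedge R$: the Roelcke uniformity (greatest lower bound of left and right uniformities); Roelcke precompact means it is totally bounded; the Roelcke compactification is the completion with respect to it. $\jmath(g)=(g(x))_{x\in\alpha X}$, where $g$ is extended to $\alpha X$ fixing the point at infinity. *)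

From HB Require Import structures.
From mathcomp Require Import all_boot all_order all_algebra.
From mathcomp Require Import all_classical all_reals.
From mathcomp Require Import topology function_spaces one_point_compactification.

Set Implicit Arguments.
Unset Strict Implicit.
Unset Printing Implicit Defensive.

Local Open Scope classical_set_scope.
Local Open Scope relation_scope.

Notation alphaX X := (one_point_compactification (discrete_topology X)).

Definition Sym (X : Type) : set (X -> X) := [set g | bijective g].
Arguments Sym X : clear implicits.

Definition is_perm_subgroup (X : Type) (G : set (X -> X)) : Prop :=
  [/\ G `<=` Sym X, G (@id X),
      (forall g h, G g -> G h -> G (g \o h)) &
      (forall g, G g -> exists2 h, G h & cancel g h /\ cancel h g)].

Definition ultratransitive (X : eqType) (G : set (X -> X)) : Prop :=
  forall xs ys : seq X, size xs = size ys -> uniq xs -> uniq ys ->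
    exists2 g, G g & map g xs = ys.

Definition elt (X : Type) (G : set (X -> X)) := {g : X -> X | G g}.

(** Pointwise stabilizer St_{x_1,...,x_n} in G (identity nbhd base of tau_d). *)
Definition stab (X : eqType) (G : set (X -> X)) (xs : seq X) : set (elt G) :=
  [set g | forall x, x \in xs -> proj1_sig g x = x].
Arguments stab {X} G xs.

Definition stab_orbit (X : eqType) (G : set (X -> X)) (xs : seq X) (z : X)
  : set X := [set y | exists2 g, stab G xs g & proj1_sig g z = y].
Arguments stab_orbit {X} G xs z.

(** Uniformities are given by their filters of entourages.
    The entourage associated with a covering C is the union of A x A, A in C. *)

(** U_X : base = the partitions {St_{xs} z | z in X}. *)
Definition UX (X : eqType) (G : set (X -> X)) : set_system (X * X) :=
  [set E | exists xs : seq X,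
     [set p | exists z, stab_orbit G xs z p.1 /\ stab_orbit G xs z p.2] `<=` E].
Arguments UX {X} G.

Definition leftU (X : eqType) (G : set (X -> X)) : set_system (elt G * elt G) :=
  [set E | exists xs : seq X,
     [set p : elt G * elt G | exists2 v, stab G xs v &
        proj1_sig p.2 = proj1_sig p.1 \o proj1_sig v] `<=` E].
Arguments leftU {X} G.

Definition rightU (X : eqType) (G : set (X -> X)) : set_system (elt G * elt G) :=
  [set E | exists xs : seq X,
     [set p : elt G * elt G | exists2 v, stab G xs v &
        proj1_sig p.2 = proj1_sig v \o proj1_sig p.1] `<=` E].
Arguments rightU {X} G.

(** The uniformity U on G: base the coverings
    { {h | (g x_k, h x_k) in U for all k} | g in G },
    xs = (x_1,...,x_n), U an entourage of U_X. *)
Definition Ucov (X : eqType) (G : set (X -> X)) : set_system (elt G * elt G) :=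
  [set E | exists (xs : seq X) (U : set (X * X)), UX G U /\
     [set p : elt G * elt G | exists g : elt G, forall x, x \in xs ->
        U (proj1_sig g x, proj1_sig p.1 x) /\
        U (proj1_sig g x, proj1_sig p.2 x)] `<=` E].
Arguments Ucov {X} G.

Definition is_uniformity (T : Type) (U : set_system (T * T)) : Prop :=
  [/\ Filter U, (forall E, U E -> diagonal `<=` E),
      (forall E, U E -> U E^-1) &
      (forall E, U E -> exists2 D, U D & D \; D `<=` E)].

Definition is_glb (T : Type) (W L R : set_system (T * T)) : Prop :=
  [/\ is_uniformity W, W `<=` L, W `<=` R &
      forall W', is_uniformity W' -> W' `<=` L -> W' `<=` R -> W' `<=` W].

Definition totally_bounded_unif (T : Type) (U : set_system (T * T)) : Prop :=
  forall E, U E -> exists2 F : set T, finite_set F & forall x, exists2 y, F y & E (y, x).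

Definition roelcke_precompact (X : eqType) (G : set (X -> X)) : Prop :=
  exists W, is_glb W (leftU G) (rightU G) /\ totally_bounded_unif W.

(** The unique uniformity of a compact Hausdorff space: the
    neighbourhoods of the diagonal. *)
Definition diag_nbhs (Y : topologicalType) : set_system (Y * Y) :=
  [set D | forall y : Y, nbhs (y, y) D].
Arguments diag_nbhs Y : clear implicits.

(** (K, e) is the completion of (T, UT), where K is a subspace of a compact
    Hausdorff space Y carrying its unique (hence complete) uniformity:
    K is the closure of e(T) (so e has dense image in K and K is compact),
    and e is a uniform embedding, i.e. UT is the uniformity induced by e. *)
Definition is_compact_completion (T : Type) (UT : set_system (T * T))
    (Y : topologicalType) (K : set Y) (e : T -> Y) : Prop :=
  [/\ hausdorff_space Y, compact [set: Y], K = closure (range e) &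
      UT = [set E | exists2 D, diag_nbhs Y D &
                    [set p | D (e p.1, e p.2)] `<=` E]].

(** j(g) = (g(x))_{x in alpha X}, g extended to alpha X fixing infinity. *)
Definition jmap (X : choiceType) (G : set (X -> X)) (g : elt G)
  : {ptws alphaX X -> alphaX X} :=
  fun a : alphaX X => omap (proj1_sig g) a.
Arguments jmap {X} G g.

From HB Require Import structures.
From mathcomp Require Import all_boot all_order all_algebra.
From mathcomp Require Import all_classical all_reals.
From mathcomp Require Import topology function_spaces one_point_compactification.

(* Ultratransitivity makes the orbits of a pointwise stabiliser St_B the points
   of B together with the single block X \ B.  Hence U_X has the base
   "equal, or both outside B", whose completion is the one-point
   compactification, and U has the base "g x and h x are equal or both outside
   B, for all x in A".  Such an entourage factors through the right and left
   stabiliser entourages of B and A by an element of G that fixes B and is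
   provided by ultratransitivity, which identifies U with L /\ R; and the
   positions of g(A) in B form a finite invariant, so U is totally bounded.
   On the compact space (alpha X)^(alpha X) the relations "equal or both
   outside B on every coordinate in A" are equivalences with open classes, so
   by compactness they generate its unique uniformity, whose trace along j is
   U.  Since G is pointwise dense in S(X), both groups have the same closure. *)

Set Implicit Arguments.
Unset Strict Implicit.
Unset Printing Implicit Defensive.
Local Open Scope classical_set_scope.
Local Open Scope relation_scope.

Definition outside_rel (T : eqType) (B : seq T) : set (T * T) :=
  [set p | p.1 = p.2 \/ (p.1 \notin B /\ p.2 \notin B)].

Definition outside_unif (T : eqType) : set_system (T * T) :=
  [set E | exists B : seq T, outside_rel B `<=` E].
Arguments outside_unif : clear implicits.

Section OutsideRel.
Variable T : eqType.
Implicit Types (B : seq T) (a b c : T).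

Lemma outside_rel_refl B a : outside_rel B (a, a).
Proof. by left. Qed.

Lemma outside_rel_sym B a b : outside_rel B (a, b) -> outside_rel B (b, a).
Proof. by case=> [/= ->|[]]; [left|right]. Qed.

Lemma outside_rel_trans B a b c :
  outside_rel B (a, b) -> outside_rel B (b, c) -> outside_rel B (a, c).
Proof.
case=> [/= -> //|[/= aB bB]] [/= <-|[/= _ cB]]; by right.
Qed.

Lemma outside_rel_sub B B' : {subset B' <= B} -> outside_rel B `<=` outside_rel B'.
Proof.
move=> sB [a b] [/= ->|[/= aB bB]]; first exact: outside_rel_refl.
by right; split; [exact: contra (@sB a) aB|exact: contra (@sB b) bB].
Qed.

Lemma outside_rel_mem B a b : a \in B -> outside_rel B (a, b) -> b = a.
Proof. by move=> aB [//|[/negP]]. Qed.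

Lemma outside_rel_index B a b : index a B = index b B -> outside_rel B (a, b).
Proof.
move=> eab; have [aB|aB] := boolP (a \in B).
  have bB : b \in B by rewrite -index_mem -eab index_mem.
  by left; rewrite /= -[LHS](nth_index a aB) -[RHS](nth_index a bB) eab.
by right; split; rewrite //= -index_mem -eab index_mem.
Qed.

End OutsideRel.

Lemma outside_rel_map (T T' : eqType) (f : T -> T') (B : seq T) a b :
  injective f -> outside_rel (map f B) (f a, f b) = outside_rel B (a, b).
Proof.
move=> f_inj; apply/propext; rewrite /outside_rel /= !(mem_map f_inj).
by split=> -[eab|nab]; [left; exact: f_inj|right|left; rewrite eab|right].
Qed.

Lemma totally_bounded_finite_quotient (T : Type) (U : set_system (T * T)) :
  (forall E, U E -> exists (K : finType) (f : T -> K),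
     forall x y, f x = f y -> E (x, y)) ->
  totally_bounded_unif U.
Proof.
move=> Uq E /Uq [K [f fE]].
have [[x0 _]|T0] := pselect (exists x : T, True); last first.
  by exists set0 => [|x]; [exact: finite_set0|case: T0; exists x].
pose rep k := if pselect (exists x, f x = k) is left e then proj1_sig (cid e) else x0.
have repK x : f (rep (f x)) = f x.
  by rewrite /rep; case: pselect => [e|[]]; [exact: proj2_sig (cid e)|exists x].
exists (rep @` setT); first exact/finite_image/finite_finset.
by move=> x; exists (rep (f x)); [exists (f x)|apply: fE].
Qed.

Definition index_ord (T : eqType) (B : seq T) (x : T) : 'I_(size B).+1 :=
  inord (index x B).

Lemma index_ord_outside_rel (T : eqType) (B : seq T) a b :
  index_ord B a = index_ord B b -> outside_rel B (a, b).
Proof.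
move=> /(congr1 val); rewrite /= !inordK ?ltnS ?index_size //.
exact: outside_rel_index.
Qed.

Lemma outside_unif_totally_bounded (T : eqType) : totally_bounded_unif (outside_unif T).
Proof.
apply: totally_bounded_finite_quotient => E [B BE].
by exists _, (index_ord B) => x y /index_ord_outside_rel /BE.
Qed.

Definition agree_outside (X : eqType) (G : set (X -> X)) (A B : seq X)
  : set (elt G * elt G) :=
  [set p : elt G * elt G | forall x, x \in A -> outside_rel B (sval p.1 x, sval p.2 x)].
Arguments agree_outside {X} G A B.

Definition agree_unif (X : eqType) (G : set (X -> X)) : set_system (elt G * elt G) :=
  [set E | exists A B, agree_outside G A B `<=` E].
Arguments agree_unif {X} G.

Definition lstab_rel (X : eqType) (G : set (X -> X)) (A : seq X)
  : set (elt G * elt G) :=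
  [set p : elt G * elt G | exists2 v, stab G A v & sval p.2 = sval p.1 \o sval v].
Arguments lstab_rel {X} G A.

Definition rstab_rel (X : eqType) (G : set (X -> X)) (B : seq X)
  : set (elt G * elt G) :=
  [set p : elt G * elt G | exists2 v, stab G B v & sval p.2 = sval v \o sval p.1].
Arguments rstab_rel {X} G B.

Lemma agree_outside_sub (X : eqType) (G : set (X -> X)) (A A' B B' : seq X) :
  {subset A' <= A} -> {subset B' <= B} ->
  agree_outside G A B `<=` agree_outside G A' B'.
Proof. by move=> sA sB p pAB x /sA xA; exact: outside_rel_sub sB _ (pAB x xA). Qed.

Lemma agree_unif_uniformity (X : eqType) (G : set (X -> X)) :
  is_uniformity (agree_unif G).
Proof.
split.
- split; first by exists [::], [::].
  + move=> P Q [A1 [B1 sP]] [A2 [B2 sQ]]; exists (A1 ++ A2), (B1 ++ B2) => p p12.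
    by split; [apply: sP|apply: sQ]; apply: agree_outside_sub p12 => x xs;
      rewrite mem_cat xs ?orbT.
  + by move=> P Q PQ [A [B sP]]; exists A, B; apply: subset_trans PQ.
- move=> E [A [B sE]] [g h] /diagonalP /= <-.
  by apply: sE => x _; exact: outside_rel_refl.
- move=> E [A [B sE]]; exists A, B => -[g h] hgh; apply: sE => x xA.
  exact/outside_rel_sym/hgh.
- move=> E [A [B sE]]; exists (agree_outside G A B); first by exists A, B.
  move=> [g k] [h hgh hhk]; apply: sE => x xA.
  exact: outside_rel_trans (hgh x xA) (hhk x xA).
Qed.

Lemma agree_unif_totally_bounded (X : eqType) (G : set (X -> X)) :
  totally_bounded_unif (agree_unif G).
Proof.
apply: totally_bounded_finite_quotient => E [A [B sE]].
exists _, (fun g : elt G => map_tuple (index_ord B \o sval g) (in_tuple A)).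
move=> g h /(congr1 val) /eq_in_map eqgh; apply: sE => x xA.
exact/index_ord_outside_rel/eqgh.
Qed.

Lemma lstab_agree_outside (X : eqType) (G : set (X -> X)) (A B : seq X) :
  lstab_rel G A `<=` agree_outside G A B.
Proof.
move=> [g h] [v Sv /= hv] x xA; rewrite /= hv /= (Sv x xA).
exact: outside_rel_refl.
Qed.

Section PermSubgroup.
Variables (X : eqType) (G : set (X -> X)).
Hypothesis HG : is_perm_subgroup G.

Lemma perm_subgroup_inj g : G g -> injective g.
Proof. by case: HG => sub _ _ _ /sub/bij_inj. Qed.

Lemma stab_notin B (s : elt G) z : stab G B s -> z \notin B -> sval s z \notin B.
Proof.
move=> Ss zB; apply: contra zB => szB.
by rewrite -(perm_subgroup_inj (proj2_sig s) (Ss _ szB)).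
Qed.

Lemma rstab_agree_outside A B : rstab_rel G B `<=` agree_outside G A B.
Proof.
move=> [g h] [v Sv /= hv] x _; rewrite /= hv /=.
have [gxB|gxB] := boolP (sval g x \in B); first by rewrite (Sv _ gxB); left.
by right; split=> //; exact: stab_notin.
Qed.

Hypothesis HU : ultratransitive G.

Lemma ultratransitive_fix (B s t : seq X) :
  size s = size t -> uniq s -> uniq t -> ~~ has (mem B) s -> ~~ has (mem B) t ->
  exists2 u, G u & {in B, forall x, u x = x} /\ map u s = t.
Proof.
move=> st us ut sB tB.
have uniq_cat r : uniq r -> ~~ has (mem B) r -> uniq (undup B ++ r).
  by move=> ur rB; rewrite cat_uniq undup_uniq ur (eq_has (mem_undup B)) rB.
have [u Gu] := @HU (undup B ++ s) (undup B ++ t) ltac:(by rewrite !size_cat st)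
  (uniq_cat _ us sB) (uniq_cat _ ut tB).
rewrite map_cat => /eqP; rewrite eqseq_cat ?size_map // => /andP[/eqP uB /eqP ust].
have /eq_in_map uid : map u (undup B) = map id (undup B) by rewrite map_id.
by exists u => //; split=> // x xB; apply: uid; rewrite mem_undup.
Qed.

Lemma stab_orbit_rel B :
  [set p | exists z, stab_orbit G B z p.1 /\ stab_orbit G B z p.2] = outside_rel B.
Proof.
have [_ Gid _ _] := HG; pose e : elt G := exist _ id Gid.
apply/seteqP; split=> -[a b] /=.
- move=> [z [[s Ss <-] [t St <-]]].
  have [zB|zB] := boolP (z \in B); first by left; rewrite /= (Ss _ zB) (St _ zB).
  by right; split; exact: stab_notin.
- have e_stab : stab G B e by [].
  case=> [/= <-|[/= aB bB]]; first by exists a; split; exists e.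
  have [u Gu [uB [uab]]] : exists2 u, G u &
      {in B, forall x, u x = x} /\ map u [:: a] = [:: b].
    by apply: ultratransitive_fix; rewrite //= ?orbF.
  by exists a; split; [exists e|exists (exist _ u Gu)].
Qed.

Lemma UXE : UX G = outside_unif X.
Proof.
by apply/seteqP; split=> E [B sE]; exists B; rewrite ?stab_orbit_rel // -stab_orbit_rel.
Qed.

Lemma UcovE : Ucov G = agree_unif G.
Proof.
apply/seteqP; split=> E.
- case=> A [U [+ sE]]; rewrite UXE => -[B sU].
  exists A, B => -[g h] hgh; apply: sE; exists g => x xA.
  by split; apply: sU; [exact: outside_rel_refl|exact: hgh].
- case=> A [B sE]; exists A, (outside_rel B); split; first by rewrite UXE; exists B.
  move=> [g h] [k hk]; apply: sE => x xA; have [kg kh] := hk x xA.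
  exact: outside_rel_trans (outside_rel_sym kg) kh.
Qed.

Lemma agree_outside_transporter A B (g h : elt G) :
  agree_outside G A B (g, h) ->
  exists2 u, G u &
    {in B, forall x, u x = x} /\ {in A, forall x, u (sval h x) = sval g x}.
Proof.
(* Only the x in A with h x outside B need moving: otherwise g x = h x in B. *)
move=> ghAB; pose A' := undup [seq x <- A | sval h x \notin B].
have A'P x : x \in A' -> x \in A /\ sval h x \notin B.
  by rewrite mem_undup mem_filter => /andP[].
have gA'B x : x \in A' -> sval g x \notin B.
  move=> /A'P [xA hxB]; have := ghAB x xA.
  by case=> [/= ->|[]].
have [u Gu [uB uhg]] : exists2 u, G u & {in B, forall x, u x = x} /\
    map u (map (sval h) A') = map (sval g) A'.
  apply: ultratransitive_fix; rewrite ?size_map ?map_inj_uniq ?undup_uniq //;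
    try exact: perm_subgroup_inj (proj2_sig _).
  - by apply/hasPn => _ /mapP [x /A'P [_ hxB] ->].
  - by apply/hasPn => _ /mapP [x /gA'B gxB ->].
exists u => //; split=> // x xA; have [hxB|hxB] := boolP (sval h x \in B).
  by rewrite uB // (outside_rel_mem hxB (outside_rel_sym (ghAB x xA))).
have xA' : x \in A' by rewrite mem_undup mem_filter hxB xA.
by move: uhg; rewrite -map_comp => /eq_in_map /(_ x xA').
Qed.

Lemma agree_outside_factor A B :
  agree_outside G A B `<=` lstab_rel G A \; rstab_rel G B.
Proof.
have [_ _ Gcomp Ginv] := HG.
move=> [g h] /agree_outside_transporter [u Gu [uB uhg]].
have [v Gv [uv _]] := Ginv u Gu.
have [gi Ggi [ggi gig]] := Ginv _ (proj2_sig g).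
(* h = (v g) (gi u h), where v = u^-1 fixes B and gi u h fixes A. *)
exists (exist _ (v \o sval g) (Gcomp _ _ Gv (proj2_sig g))).
  by exists (exist _ v Gv) => // b bB /=; rewrite -{1}(uB b bB) uv.
exists (exist _ (gi \o u \o sval h) (Gcomp _ _ (Gcomp _ _ Ggi Gu) (proj2_sig h))).
  by move=> x xA /=; rewrite uhg // ggi.
by apply/funext => y /=; rewrite gig uv.
Qed.

Lemma agree_unif_glb : is_glb (agree_unif G) (leftU G) (rightU G).
Proof.
split.
- exact: agree_unif_uniformity.
- move=> E [A [B sE]]; exists A; apply: subset_trans sE.
  exact: lstab_agree_outside.
- move=> E [A [B sE]]; exists B; apply: subset_trans sE.
  exact: rstab_agree_outside.
- move=> W [_ _ _ Wsplit] WL WR E /Wsplit [D WD DE].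
  have [A sA] := WL D WD; have [B sB] := WR D WD.
  exists A, B => p /agree_outside_factor [m gm mh]; apply: DE.
  by exists m; [exact: sB|exact: sA].
Qed.

End PermSubgroup.

Definition open_equiv (T : topologicalType) (R : set (T * T)) : Prop :=
  [/\ forall x, R (x, x), forall x y, R (x, y) -> R (y, x),
      forall x y z, R (x, y) -> R (y, z) -> R (x, z) &
      forall x, open [set y | R (x, y)]].

Lemma open_equiv_class_nbhs (T : topologicalType) (R : set (T * T)) x :
  open_equiv R -> nbhs x [set y | R (x, y)].
Proof. by case=> Rrefl _ _ Ropen; apply: open_nbhs_nbhs; split. Qed.

Lemma open_equiv_diag_nbhs (T : topologicalType) (R : set (T * T)) :
  open_equiv R -> diag_nbhs T R.
Proof.
move=> Req x; have [_ Rsym Rtrans _] := Req.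
exists ([set y | R (x, y)], [set y | R (x, y)]).
  by split; exact: open_equiv_class_nbhs.
by move=> [y z] [/= Rxy Rxz]; exact: Rtrans (Rsym _ _ Rxy) Rxz.
Qed.

Lemma open_equiv_hausdorff (T : topologicalType) :
  (forall p q : T, p != q -> exists2 R, open_equiv R & ~ R (p, q)) ->
  hausdorff_space T.
Proof.
move=> sep p q pq; have [//|/sep [R Req nRpq]] := eqVneq p q.
have [_ Rsym Rtrans _] := Req.
have [r [Rpr Rqr]] :=
  pq _ _ (open_equiv_class_nbhs p Req) (open_equiv_class_nbhs q Req).
by case: nRpq; exact: Rtrans Rpr (Rsym _ _ Rqr).
Qed.

Section CompactOpenEquiv.
Variables (T : ptopologicalType) (J : eqType) (R : J -> set (T * T)).
Hypotheses (T_compact : compact [set: T]) (R_equiv : forall i, open_equiv (R i)).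
Hypothesis R_directed : forall s : seq J, exists k, {in s, forall i, R k `<=` R i}.
Hypothesis R_base : forall x N, nbhs x N -> exists i, [set y | R i (x, y)] `<=` N.

(* Pick for each x a class on whose square D holds; by compactness finitely
   many of these classes cover T, and a common refinement of their indices
   does the job. *)
Lemma diag_nbhs_open_equivP D : diag_nbhs T D <-> exists i, R i `<=` D.
Proof.
split=> [DD|[i RD] x]; last exact: filterS RD (open_equiv_diag_nbhs (R_equiv i) x).
have class_sq x : exists i, forall y z, R i (x, y) -> R i (x, z) -> D (y, z).
  have [[P Q] [/= Px Qx] PQ] := DD x.
  have [i sPQ] := R_base (filterI Px Qx).
  by exists i => y z /sPQ [Py _] /sPQ [_ Qz]; exact: (PQ (y, z)).
have [ix Dix] := choice class_sq.
have [C _ Ccover] :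
    finite_subset_cover [set: T] (fun x => [set y | R (ix x) (x, y)]) [set: T].
  have := T_compact; rewrite compact_cover; apply.
    by move=> x _; have [_ _ _] := R_equiv (ix x); apply.
  by move=> x _; exists x => //; have [Rrefl _ _ _] := R_equiv (ix x).
have [k Rk] := R_directed (map ix (finmap.enum_fset C)).
exists k => -[y z] Ryz; have [x xC Rxy] := Ccover y I.
have [_ _ Rtrans _] := R_equiv (ix x).
apply: Dix Rxy (Rtrans _ _ _ Rxy (Rk _ (map_f ix xC) _ Ryz)).
Qed.

Lemma induced_diag_nbhsE (S : Type) (e : S -> T) :
  [set E | exists2 D, diag_nbhs T D & [set p | D (e p.1, e p.2)] `<=` E] =
  [set E | exists i, [set p | R i (e p.1, e p.2)] `<=` E].
Proof.
apply/seteqP; split=> E.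
  by move=> [D /diag_nbhs_open_equivP [i RD] sE]; exists i => p /RD /sE.
by move=> [i sE]; exists (R i) => //; apply/diag_nbhs_open_equivP; exists i.
Qed.

End CompactOpenEquiv.

Lemma discrete_compact_finite (X : choiceType) (C : set (discrete_topology X)) :
  compact C -> finite_set C.
Proof.
move=> cC; apply: contrapT => Cinf.
pose F : set_system (discrete_topology X) := [set S | finite_set (C `\` S)].
have F_filter : ProperFilter F.
  split; first by rewrite /F /= setD0.
  split; first by rewrite /F /= setDT; exact: finite_set0.
    by move=> P Q FP FQ; rewrite /F /= setDIr finite_setU.
  by move=> P Q PQ; apply: sub_finite_set => x [Cx nQx]; split=> // /PQ.
have [p [_ clp]] := cC F F_filter ltac:(by rewrite /F /= setDv; exact: finite_set0).
have FCp : F (C `\` [set p]).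
  apply: sub_finite_set (finite_set1 p) => x [Cx] /= nCx.
  by apply: contrapT => xp; apply: nCx.
by have [x [[_ xp] px]] := clp _ _ FCp (discrete_set1 p).
Qed.

Section OnePoint.
Variable X : choiceType.
Local Notation aX := (alphaX X).

Lemma nbhs_noneP (W : set aX) :
  nbhs (None : aX) W <-> exists K : seq X, [set o : aX | o \notin map Some K] `<=` W.
Proof.
split.
- case=> C [/discrete_compact_finite /finite_seqP [K ->] _] sW.
  exists K => -[v|] /= vK; apply: sW; last by right.
  by left; exists v => //; apply/negP; rewrite -(mem_map Some_inj).
- case=> K sW; exists ([set` K] : set (discrete_topology X)).
    by split; [exact/finite_compact/finite_seq|exact: discrete_closed].
  move=> _ [[v /= vK <-]|->]; apply: sW => /=.
    by rewrite (mem_map Some_inj); exact/negP.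
  by apply/mapP => -[].
Qed.

Lemma nbhs_some (u : X) : nbhs (Some u : aX) [set Some u].
Proof.
have := @one_point_compactification_some_nbhs (discrete_topology X) u _
  (@discrete_set1 (discrete_topology X) u).
by rewrite image_set1.
Qed.

Lemma outside_rel_someE (B : seq X) a b :
  outside_rel (map Some B) (Some a : aX, Some b) = outside_rel B (a, b).
Proof. exact/outside_rel_map/Some_inj. Qed.

Lemma outside_rel_some_open_equiv (B : seq X) :
  open_equiv (outside_rel (map Some B) : set (aX * aX)).
Proof.
split; [exact: outside_rel_refl|exact: outside_rel_sym|exact: outside_rel_trans|].
move=> c; rewrite openE => -[v|] Rcv; rewrite /interior /=.
  by apply: (filterS _ (nbhs_some (u := v))) => _ ->.
apply/nbhs_noneP; exists B => o oB; right; split=> //.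
by case: Rcv => [/= ->|[]//]; apply/mapP => -[].
Qed.

Lemma outside_rel_some_nbhs_base (c : aX) (N : set aX) :
  nbhs c N -> exists B : seq X, [set o | outside_rel (map Some B) (c, o)] `<=` N.
Proof.
case: c => [u uN|/nbhs_noneP [K sN]].
  exists [:: u] => o /(outside_rel_mem (mem_head _ _)) ->.
  exact: nbhs_singleton uN.
exists K => o [/= <-|[_ oK]]; apply: sN => //=.
by apply/mapP => -[].
Qed.

Lemma outside_rel_some_directed (s : seq (seq X)) : exists B0 : seq X,
  {in s, forall B, outside_rel (map Some B0) `<=` outside_rel (map Some B)}.
Proof.
exists (flatten s) => B Bs; apply: outside_rel_sub; apply: sub_map => x xB.
by apply/flattenP; exists B.
Qed.

Lemma alphaX_hausdorff : hausdorff_space aX.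
Proof.
apply: open_equiv_hausdorff => p q pq.
exists (outside_rel (map Some (pmap id [:: p; q]))).
  exact: outside_rel_some_open_equiv.
case=> [/eqP|[]]; first by rewrite (negbTE pq).
by case: p q pq => [a|] [b|] //= _; rewrite ?mem_head ?inE ?eqxx ?orbT.
Qed.

Lemma alphaX_diag_nbhsE (S : Type) (e : S -> aX) :
  [set E | exists2 D, diag_nbhs aX D & [set p | D (e p.1, e p.2)] `<=` E] =
  [set E | exists B : seq X, [set p | outside_rel (map Some B) (e p.1, e p.2)] `<=` E].
Proof.
by rewrite (induced_diag_nbhsE one_point_compactification_compact
  outside_rel_some_open_equiv outside_rel_some_directed outside_rel_some_nbhs_base).
Qed.

Lemma closure_range_some :
  infinite_set [set: X] -> closure (range (Some : X -> aX)) = [set: aX].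
Proof.
move=> Xinf; apply/seteqP; split=> // -[x|] _ W.
  by move=> /nbhs_singleton Wx; exists (Some x); split=> //; exists x.
move=> /nbhs_noneP [K sW].
have [y yK] : exists y, y \notin K.
  apply: contrapT => allK; apply: Xinf; apply: sub_finite_set (finite_seq K).
  by move=> y _ /=; apply: contrapT => yK; apply: allK; exists y; exact/negP.
by exists (Some y); split; [exists y|apply: sW; rewrite /= (mem_map Some_inj)].
Qed.

Lemma outside_unif_completion :
  infinite_set [set: X] ->
  is_compact_completion (outside_unif X) [set: aX] (Some : X -> aX).
Proof.
move=> Xinf; split.
- exact: alphaX_hausdorff.
- exact: one_point_compactification_compact.
- by rewrite closure_range_some.
rewrite alphaX_diag_nbhsE; apply/seteqP; split=> E [B sE]; exists B => -[a b] /=.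
  by rewrite outside_rel_someE => /sE.
by move=> ab; apply: sE; rewrite /= outside_rel_someE.
Qed.

End OnePoint.

Local Notation Ptws X := {ptws alphaX X -> alphaX X}.

(* Needed by compact_cover, which is stated for pointed spaces. *)
HB.instance Definition _ (X : choiceType) :=
  isPointed.Build (Ptws X) (fun _ => None).

Definition box_rel (X : choiceType) (A : seq (alphaX X)) (B : seq X)
  : set (Ptws X * Ptws X) :=
  [set q | forall a, a \in A -> outside_rel (map Some B) (q.1 a, q.2 a)].

Section PtwsAlphaX.
Variable X : choiceType.
Local Notation aX := (alphaX X).

Lemma ptws_hausdorff : hausdorff_space (Ptws X).
Proof. exact: hausdorff_product (fun _ => @alphaX_hausdorff X). Qed.

Lemma ptws_compact : compact [set: Ptws X].
Proof.
have := tychonoff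
  (fun _ : aX => @one_point_compactification_compact (discrete_topology X)).
by congr compact; apply/seteqP.
Qed.

Lemma nbhs_ptws_box (y : Ptws X) (A : seq aX) (W : aX -> set aX) :
  (forall a, a \in A -> nbhs (y a) (W a)) ->
  nbhs y [set f : Ptws X | forall a, a \in A -> W a (f a)].
Proof.
elim: A => [|a A IH] WA.
  by apply: filterS (@filterT _ _ (@nbhs_filter (Ptws X) y)) => f.
have Wa : nbhs y [set f : Ptws X | W a (f a)] :=
  @proj_continuous aX (fun _ => aX) a y (W a) (WA a (mem_head a A)).
have WA' : nbhs y [set f : Ptws X | forall b, b \in A -> W b (f b)].
  by apply: IH => b bA; apply: WA; rewrite inE bA orbT.
apply: filterS (filterI Wa WA') => f [Wfa WfA] b.
by rewrite inE => /predU1P [->|/WfA].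
Qed.

Lemma box_rel_sub (A A' : seq aX) (B B' : seq X) :
  {subset A' <= A} -> {subset B' <= B} -> box_rel A B `<=` box_rel A' B'.
Proof.
move=> sA sB q qAB a /sA aA; apply: outside_rel_sub (qAB a aA).
exact: sub_map.
Qed.

Lemma box_rel_open_equiv (A : seq aX) (B : seq X) : open_equiv (box_rel A B).
Proof.
have [Rrefl Rsym Rtrans Ropen] := outside_rel_some_open_equiv B.
split=> [f a _|f g fg a aA|f g h fg gh a aA|y]; first exact: Rrefl.
- exact/Rsym/fg.
- exact: Rtrans (fg a aA) (gh a aA).
rewrite openE => f yf.
apply: (nbhs_ptws_box (W := fun a o => outside_rel (map Some B) (y a, o))) => a aA.
by apply: open_nbhs_nbhs; split; [exact: Ropen|exact: yf].
Qed.

Lemma box_rel_directed (s : seq (seq aX * seq X)) :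
  exists p, {in s, forall q, box_rel p.1 p.2 `<=` box_rel q.1 q.2}.
Proof.
exists (flatten (map fst s), flatten (map snd s)) => q qs.
by apply: box_rel_sub => x xq; apply/flattenP; [exists q.1|exists q.2];
  rewrite // map_f.
Qed.

Lemma box_rel_nbhs_base (y : Ptws X) (N : set (Ptws X)) :
  nbhs y N -> exists p, [set f | box_rel p.1 p.2 (y, f)] `<=` N.
Proof.
pose Fb := filter_from [set: seq aX * seq X]
  (fun p => [set f | box_rel p.1 p.2 (y, f)]).
have Fb_filter : Filter Fb.
  apply: filter_from_filter; first by exists ([::], [::]).
  move=> p q _ _; have [r rpq] := box_rel_directed [:: p; q].
  by exists r => // f yf; split; apply: rpq yf; rewrite !inE eqxx ?orbT.
suff /[apply] [[p _ sN]] : Fb --> y by exists p.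
apply/(@cvg_sup _ _ _ Fb y Fb_filter) => a.
apply/cvg_image => //; first by apply/seteqP; split=> // o _; exists (fun _ => o).
move=> W /outside_rel_some_nbhs_base [B sW]; exists [set f : Ptws X | W (f a)].
  by exists ([:: a], B) => // f /(_ a (mem_head _ _)) /sW.
by apply/seteqP; split=> [_ [f Wfa <-]|o Wo] //; exists (fun _ => o).
Qed.

Lemma ptws_diag_nbhsE (S : Type) (e : S -> Ptws X) :
  [set E | exists2 D, diag_nbhs (Ptws X) D & [set p | D (e p.1, e p.2)] `<=` E] =
  [set E | exists p : seq aX * seq X,
             [set q | box_rel p.1 p.2 (e q.1, e q.2)] `<=` E].
Proof.
by rewrite (induced_diag_nbhsE ptws_compact (fun p => box_rel_open_equiv p.1 p.2)
  box_rel_directed box_rel_nbhs_base).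
Qed.

End PtwsAlphaX.

Lemma box_rel_jmap (X : choiceType) (G : set (X -> X)) A B (g h : elt G) :
  box_rel A B (jmap G g, jmap G h) <-> agree_outside G (pmap id A) B (g, h).
Proof.
split=> [gh x|gh [x|] aA /=]; last exact: outside_rel_refl.
  by rewrite mem_pmap map_id => /gh; rewrite /= outside_rel_someE.
by rewrite outside_rel_someE; apply: gh; rewrite mem_pmap map_id.
Qed.

Lemma jmap_completion (X : choiceType) (G : set (X -> X)) :
  is_compact_completion (agree_unif G) (closure (range (jmap G))) (jmap G).
Proof.
split; [exact: ptws_hausdorff|exact: ptws_compact|by []|].
rewrite ptws_diag_nbhsE; apply/seteqP; split=> E.
  move=> [A [B sE]]; exists (map Some A, B) => -[g h] /box_rel_jmap /=.
  by rewrite (map_pK (f := id) (g := Some) (fun _ => erefl)) => /sE.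
by move=> [[A B] sE]; exists (pmap id A), B => -[g h] gh; apply: sE; exact/box_rel_jmap.
Qed.

Lemma Sym_perm_subgroup (X : Type) : is_perm_subgroup (Sym X).
Proof.
split=> //; first by exists id.
  move=> g h [gi ggi gig] [hi hhi hih]; exists (hi \o gi) => x /=.
    by rewrite ggi hhi.
  by rewrite hih gig.
by move=> g [gi ggi gig]; exists gi; [exists g|].
Qed.

Lemma ultratransitive_Sym (X : eqType) (G : set (X -> X)) :
  is_perm_subgroup G -> ultratransitive G -> ultratransitive (Sym X).
Proof.
case=> GS _ _ _ HU xs ys sxy uxs uys.
by have [g /GS SXg gxy] := HU xs ys sxy uxs uys; exists g.
Qed.

Lemma is_glb_unique (T : Type) (W1 W2 L R : set_system (T * T)) :
  is_glb W1 L R -> is_glb W2 L R -> W1 = W2.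
Proof.
by case=> U1 L1 R1 max1 [U2 L2 R2 max2]; apply/seteqP; split; [apply: max2|apply: max1].
Qed.

Lemma closure_range_jmap_Sym (X : choiceType) (G : set (X -> X)) :
  is_perm_subgroup G -> ultratransitive G ->
  closure (range (jmap G)) = closure (range (jmap (Sym X))).
Proof.
move=> HG HU; have [GS _ _ _] := HG.
apply/seteqP; split.
  by apply: closureS => _ [g _ <-]; exists (exist _ (sval g) (GS _ (proj2_sig g))).
rewrite [X in _ `<=` X](closure_id _).1; last exact: closed_closure.
apply: closureS => _ [s _ <-] N /box_rel_nbhs_base [[A B] sN].
pose xs := undup (pmap id A).
have s_inj : injective (sval s) by apply/bij_inj/(proj2_sig s).
have [g Gg gs] := HU xs (map (sval s) xs) (esym (size_map _ _)) (undup_uniq _)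
  ltac:(by rewrite (map_inj_uniq s_inj) undup_uniq).
exists (jmap G (exist _ g Gg)); split; first by exists (exist _ g Gg).
apply: sN => -[x|] xA /=; last exact: outside_rel_refl.
have xxs : x \in xs by rewrite mem_undup mem_pmap map_id.
have /eq_in_map/(_ x xxs) -> := gs; exact: outside_rel_refl.
Qed.

Unset Implicit Arguments.
Set Strict Implicit.

Theorem corollary4p2 (X : choiceType) (G : set (X -> X)) :
  infinite_set [set: X] -> is_perm_subgroup G -> ultratransitive G ->
  [/\ totally_bounded_unif (UX G),
      is_compact_completion (UX G) [set: alphaX X] (Some : X -> alphaX X),
      is_glb (Ucov G) (leftU G) (rightU G),
      roelcke_precompact G &
      (forall W, is_glb W (leftU G) (rightU G) ->
         is_compact_completion W (closure (range (jmap G))) (jmap G))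
      /\
      (forall W, is_glb W (leftU (Sym X)) (rightU (Sym X)) ->
         is_compact_completion W (closure (range (jmap G)))
                                 (jmap (Sym X)))].
Proof.
move=> Xinf HG HU.
have glbG := agree_unif_glb HG HU.
have glbS := agree_unif_glb (Sym_perm_subgroup X) (ultratransitive_Sym HG HU).
rewrite (UXE HG HU) (UcovE HG HU); split=> //.
- exact: outside_unif_totally_bounded.
- exact: outside_unif_completion.
- by exists (agree_unif G); split=> //; exact: agree_unif_totally_bounded.
split=> W /is_glb_unique; [move=> /(_ _ glbG) -> | move=> /(_ _ glbS) ->].
  exact: jmap_completion.
by rewrite closure_range_jmap_Sym //; exact: jmap_completion.
Qed.
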